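(* Let $a,b,c,p\in\mathbb{C}$ with $-c\notin\mathbb{N}\cup\{0\}$. Suppose that \[ e^{pz}F(a,b;c;z)=\sum_{n=0}^\infty u_nz^n,\qquad |z|<1. \] Then $u_0=1$, $u_1=\frac{ab}{c}+p$, $u_2=\frac{a(1+a)b(1+b)}{2c(1+c)}+\frac{abp}{c}+\frac{p^2}{2}$, and for all integers $n\ge2$, \[ u_{n+1}=\frac{(a+n)(b+n)+p(c+2n)}{(n+1)(c+n)}u_n-\frac{p(a+b+2n+p-1)}{(n+1)(c+n)}u_{n-1}+\frac{p^2}{(n+1)(c+n)}u_{n-2}. \]
   Context: For $a\in\mathbb{C}$, $(a)_n=a(a+1)\cdots(a+n-1)$ denotes the Pochhammer symbol, with $(a)_0=1$. For $a,b,c\in\mathbb{C}$ with $-c\notin\mathbb{N}\cup\{0\}$, the Gaussian hypergeometric function is $F(a,b;c;z)=\sum_{n=0}^\infty \frac{(a)_n(b)_n}{(c)_n\,n!}z^n$, $|z|<1$. *)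

From Stdlib Require Import Reals Factorial.
From Coquelicot Require Import Coquelicot.
Open Scope C_scope.

Fixpoint poch (a : C) (n : nat) : C :=
  match n with
  | O => 1
  | S k => poch a k * (a + RtoC (INR k))
  end.

Definition hyp_term (a b c z : C) (n : nat) : C :=
  poch a n * poch b n / (poch c n * RtoC (INR (Factorial.fact n))) * z ^ n.

Definition cexp_term (w : C) (n : nat) : C := w ^ n / RtoC (INR (Factorial.fact n)).

Definition c_admissible (c : C) : Prop := forall n : nat, c <> - RtoC (INR n).

(* The coefficients of e^{pz} F(a,b;c;z) are the Cauchy products
   v_n = sum_j e_j h_{n-j} of e_j = p^j/j! and of the hypergeometric
   coefficients h_m; since both series converge absolutely in the unit disk,
   uniqueness of power series coefficients gives u_n = v_n.  The two factors
   obey first-order recurrences, (j+1) e_{j+1} = p e_j and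
   (m+1)(c+m) h_{m+1} = (a+m)(b+m) h_m.  Multiply the second by e_j with
   m = n-j and sum over j: expanding (m+1)(c+m) and (a+m)(b+m) as quadratic
   polynomials in j, the first recurrence turns the moments
   sum_j j e_j h_{k-j} and sum_j j(j-1) e_j h_{k-j} into p v_{k-1} and
   p^2 v_{k-2}, which yields the three-term recurrence for v_n. *)

From Stdlib Require Import Reals Factorial Lia Lra.
From Coquelicot Require Import Coquelicot.
Open Scope C_scope.

Definition cauchy_prod (x y : nat -> C) (n : nat) : C :=
  sum_n (fun k => x k * y (n - k)%nat) n.

Section ReIm.
Context {T : Type} {F : (T -> Prop) -> Prop} {FF : Filter F}.

Lemma filterlim_Re (f : T -> C) (l : C) :
  filterlim f F (locally l) -> filterlim (fun t => Re (f t)) F (locally (Re l)).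
Proof.
  intros H. apply filterlim_locally. intros eps.
  generalize (proj1 (filterlim_locally _ _) H eps). apply filter_imp.
  intros t [Hre _]. exact Hre.
Qed.

Lemma filterlim_Im (f : T -> C) (l : C) :
  filterlim f F (locally l) -> filterlim (fun t => Im (f t)) F (locally (Im l)).
Proof.
  intros H. apply filterlim_locally. intros eps.
  generalize (proj1 (filterlim_locally _ _) H eps). apply filter_imp.
  intros t [_ Him]. exact Him.
Qed.

Lemma filterlim_Re_Im (f : T -> C) (l : C) :
  filterlim (fun t => Re (f t)) F (locally (Re l)) ->
  filterlim (fun t => Im (f t)) F (locally (Im l)) ->
  filterlim f F (locally l).
Proof.
  intros Hre Him. apply filterlim_locally. intros eps.
  generalize (filter_and _ _ (proj1 (filterlim_locally _ _) Hre eps)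
                             (proj1 (filterlim_locally _ _) Him eps)).
  apply filter_imp. intros t Ht. exact Ht.
Qed.

End ReIm.

Lemma Re_sum_n (f : nat -> C) n : Re (sum_n f n) = sum_n (fun k => Re (f k)) n.
Proof.
  induction n as [|n IH]; [rewrite !sum_O; reflexivity|].
  rewrite !sum_Sn, <- IH. reflexivity.
Qed.

Lemma Im_sum_n (f : nat -> C) n : Im (sum_n f n) = sum_n (fun k => Im (f k)) n.
Proof.
  induction n as [|n IH]; [rewrite !sum_O; reflexivity|].
  rewrite !sum_Sn, <- IH. reflexivity.
Qed.

Lemma is_series_Re (f : nat -> C) l : is_series f l -> is_series (fun n => Re (f n)) (Re l).
Proof.
  intros H. apply (filterlim_ext (fun n => Re (sum_n f n))).
  - intros n. apply Re_sum_n.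
  - apply filterlim_Re, H.
Qed.

Lemma is_series_Im (f : nat -> C) l : is_series f l -> is_series (fun n => Im (f n)) (Im l).
Proof.
  intros H. apply (filterlim_ext (fun n => Im (sum_n f n))).
  - intros n. apply Im_sum_n.
  - apply filterlim_Im, H.
Qed.

Lemma is_series_Re_Im (f : nat -> C) l :
  is_series (fun n => Re (f n)) (Re l) -> is_series (fun n => Im (f n)) (Im l) ->
  is_series f l.
Proof.
  intros Hre Him. apply filterlim_Re_Im.
  - apply (filterlim_ext (fun n => sum_n (fun k => Re (f k)) n)); [|exact Hre].
    intros n. symmetry. apply Re_sum_n.
  - apply (filterlim_ext (fun n => sum_n (fun k => Im (f k)) n)); [|exact Him].
    intros n. symmetry. apply Im_sum_n.
Qed.

Lemma im_le_Cmod (c : C) : Rabs (Im c) <= Cmod c.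
Proof. eapply Rle_trans; [apply Rmax_r | apply Rmax_Cmod]. Qed.

Lemma ex_series_Rabs_Re (x : nat -> C) :
  ex_series (fun n => Cmod (x n)) -> ex_series (fun n => Rabs (Re (x n))).
Proof.
  apply (@ex_series_le R_AbsRing R_CompleteNormedModule).
  intros n. rewrite Rabs_Rabsolu. apply re_le_Cmod.
Qed.

Lemma ex_series_Rabs_Im (x : nat -> C) :
  ex_series (fun n => Cmod (x n)) -> ex_series (fun n => Rabs (Im (x n))).
Proof.
  apply (@ex_series_le R_AbsRing R_CompleteNormedModule).
  intros n. rewrite Rabs_Rabsolu. apply im_le_Cmod.
Qed.

Lemma Re_cauchy_prod (x y : nat -> C) n :
  Re (cauchy_prod x y n) =
  (sum_f_R0 (fun k => Re (x k) * Re (y (n - k)%nat)) n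
   - sum_f_R0 (fun k => Im (x k) * Im (y (n - k)%nat)) n)%R.
Proof.
  unfold cauchy_prod. rewrite Re_sum_n, <- minus_sum, <- sum_n_Reals.
  apply sum_n_ext. intros k. apply re_mult.
Qed.

Lemma Im_cauchy_prod (x y : nat -> C) n :
  Im (cauchy_prod x y n) =
  (sum_f_R0 (fun k => Re (x k) * Im (y (n - k)%nat)) n
   + sum_f_R0 (fun k => Im (x k) * Re (y (n - k)%nat)) n)%R.
Proof.
  unfold cauchy_prod. rewrite Im_sum_n, <- plus_sum, <- sum_n_Reals.
  apply sum_n_ext. intros k. apply im_mult.
Qed.

Lemma is_series_cauchy_prod (x y : nat -> C) (X Y : C) :
  is_series x X -> is_series y Y ->
  ex_series (fun n => Cmod (x n)) -> ex_series (fun n => Cmod (y n)) ->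
  is_series (cauchy_prod x y) (X * Y).
Proof.
  intros Hx Hy Ax Ay.
  pose proof (is_series_Re _ _ Hx) as Rx. pose proof (is_series_Im _ _ Hx) as Ix.
  pose proof (is_series_Re _ _ Hy) as Ry. pose proof (is_series_Im _ _ Hy) as Iy.
  pose proof (ex_series_Rabs_Re _ Ax) as ARx. pose proof (ex_series_Rabs_Im _ Ax) as AIx.
  pose proof (ex_series_Rabs_Re _ Ay) as ARy. pose proof (ex_series_Rabs_Im _ Ay) as AIy.
  apply is_series_Re_Im.
  - rewrite re_mult.
    apply (is_series_ext _ _ _ (fun n => eq_sym (Re_cauchy_prod x y n))).
    exact (is_series_minus _ _ _ _ (is_series_mult _ _ _ _ Rx Ry ARx ARy)
                                   (is_series_mult _ _ _ _ Ix Iy AIx AIy)).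
  - rewrite im_mult.
    apply (is_series_ext _ _ _ (fun n => eq_sym (Im_cauchy_prod x y n))).
    exact (is_series_plus _ _ _ _ (is_series_mult _ _ _ _ Rx Iy ARx AIy)
                                  (is_series_mult _ _ _ _ Ix Ry AIx ARy)).
Qed.

Lemma is_series_cauchy_prod_pow (x y : nat -> C) (z X Y : C) :
  is_series (fun n => x n * z ^ n) X -> is_series (fun n => y n * z ^ n) Y ->
  ex_series (fun n => Cmod (x n * z ^ n)) -> ex_series (fun n => Cmod (y n * z ^ n)) ->
  is_series (fun n => cauchy_prod x y n * z ^ n) (X * Y).
Proof.
  intros Hx Hy Ax Ay.
  apply (is_series_ext (cauchy_prod (fun n => x n * z ^ n) (fun n => y n * z ^ n))).
  - intros n. unfold cauchy_prod. rewrite Cmult_comm.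
    etransitivity; [|exact (sum_n_mult_l (z ^ n) _ n)].
    apply sum_n_ext_loc. intros k Hk.
    replace (z ^ n) with (z ^ k * z ^ (n - k)%nat) by (rewrite <- Cpow_add_r; f_equal; lia).
    unfold mult. simpl. ring.
  - apply is_series_cauchy_prod; assumption.
Qed.

Lemma is_lim_seq_Cmod_of_is_series (t : nat -> C) l :
  is_series t l -> is_lim_seq (fun n => Cmod (t n)) 0%R.
Proof.
  intros H.
  assert (Ht : filterlim t eventually (locally (RtoC 0))).
  { apply filterlim_Re_Im.
    - exact (ex_series_lim_0 _ (ex_intro _ _ (is_series_Re _ _ H))).
    - exact (ex_series_lim_0 _ (ex_intro _ _ (is_series_Im _ _ H))). }
  apply (filterlim_ext (fun n => norm (t n))); [intros n; reflexivity|].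
  eapply filterlim_comp; [exact Ht|].
  pose proof (filterlim_norm (K := C_AbsRing) (V := C_NormedModule) (RtoC 0)) as Hn.
  change (norm (RtoC 0)) with (Cmod (RtoC 0)) in Hn. rewrite Cmod_0 in Hn. exact Hn.
Qed.

Lemma CV_radius_Cmod_ge_of_is_series (q : nat -> C) (z l : C) :
  is_series (fun n => q n * z ^ n) l -> Rbar_le (Cmod z) (CV_radius (fun n => Cmod (q n))).
Proof.
  intros H. apply Rbar_not_lt_le. intros Hlt.
  apply (CV_disk_outside (fun n => Cmod (q n)) (Cmod z)).
  - rewrite Rabs_pos_eq by apply Cmod_ge_0. exact Hlt.
  - apply (is_lim_seq_ext (fun n => Cmod (q n * z ^ n))).
    + intros n. rewrite Cmod_mult, Cmod_pow. reflexivity.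
    + exact (is_lim_seq_Cmod_of_is_series _ _ H).
Qed.

Lemma CV_radius_ge_of_is_series (a : nat -> R) (x l : R) :
  is_series (fun n => a n * x ^ n)%R l -> Rbar_le (Rabs x) (CV_radius a).
Proof.
  intros H. apply Rbar_not_lt_le. intros Hlt.
  exact (CV_disk_outside a x Hlt (ex_series_lim_0 _ (ex_intro _ _ H))).
Qed.

Lemma ex_series_Cmod_unit_disk (q : nat -> C) :
  (forall z, Cmod z < 1 -> exists l, is_series (fun n => q n * z ^ n) l) ->
  forall z, Cmod z < 1 -> ex_series (fun n => Cmod (q n * z ^ n)).
Proof.
  intros Hq z Hz. pose proof (Cmod_ge_0 z).
  set (r := ((1 + Cmod z) / 2)%R).
  assert (Hr : Cmod (RtoC r) = r) by (rewrite Cmod_R; apply Rabs_pos_eq; unfold r; lra).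
  destruct (Hq (RtoC r)) as [l Hl]; [rewrite Hr; unfold r; lra|].
  pose proof (CV_radius_Cmod_ge_of_is_series _ _ _ Hl) as Hrad. rewrite Hr in Hrad.
  apply (ex_series_ext (fun n => Rabs (Cmod (q n) * Cmod z ^ n))).
  - intros n. rewrite Rabs_pos_eq, Cmod_mult, Cmod_pow; [reflexivity|].
    apply Rmult_le_pos; [apply Cmod_ge_0 | apply pow_le, Cmod_ge_0].
  - apply CV_disk_inside. rewrite Rabs_pos_eq by exact H.
    eapply Rbar_lt_le_trans; [|exact Hrad]. simpl. unfold r. lra.
Qed.

Lemma pseries_coef_eq_0 (a : nat -> R) :
  (forall x, Rabs x < 1 -> is_series (fun n => a n * x ^ n)%R 0%R) -> forall n, a n = 0%R.
Proof.
  intros H n.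
  assert (Hrad : Rbar_lt 0 (CV_radius a)).
  { assert (Hhalf : Rabs (1 / 2) = (1 / 2)%R) by (apply Rabs_pos_eq; lra).
    apply Rbar_lt_le_trans with (Rabs (1 / 2)).
    - rewrite Hhalf. simpl. lra.
    - apply (CV_radius_ge_of_is_series a (1 / 2) 0), H. rewrite Hhalf. lra. }
  apply (PSeries_ext_recip a (fun _ => 0%R) n Hrad).
  - rewrite CV_radius_const_0. exact I.
  - exists (mkposreal 1 Rlt_0_1). intros x Hx.
    change (Rabs (x - 0) < 1) in Hx. rewrite Rminus_0_r in Hx.
    rewrite PSeries_const_0. apply is_pseries_unique, is_pseries_R, H, Hx.
Qed.

Lemma pseries_coef_unique (u v : nat -> C) :
  (forall z, Cmod z < 1 ->
     exists l, is_series (fun n => u n * z ^ n) l /\ is_series (fun n => v n * z ^ n) l) ->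
  forall n, u n = v n.
Proof.
  intros H n. apply Ceq_minus. revert n.
  assert (Hw : forall x : R, Rabs x < 1 ->
            is_series (fun n => (u n - v n) * RtoC x ^ n) (RtoC 0)).
  { intros x Hx. destruct (H x) as [l [Hu Hv]]; [rewrite Cmod_R; exact Hx|].
    rewrite <- (Cplus_opp_r l).
    apply (is_series_ext (fun n => u n * RtoC x ^ n + - (v n * RtoC x ^ n))).
    - intros n. simpl. ring.
    - exact (is_series_minus _ _ _ _ Hu Hv). }
  assert (Hre : forall n, Re (u n - v n) = 0%R).
  { apply pseries_coef_eq_0. intros x Hx.
    apply (is_series_ext (fun n => Re ((u n - v n) * RtoC x ^ n))).
    - intros n. rewrite <- RtoC_pow. apply re_scal_r.
    - exact (is_series_Re _ _ (Hw x Hx)). }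
  assert (Him : forall n, Im (u n - v n) = 0%R).
  { apply pseries_coef_eq_0. intros x Hx.
    apply (is_series_ext (fun n => Im ((u n - v n) * RtoC x ^ n))).
    - intros n. rewrite <- RtoC_pow. apply im_scal_r.
    - exact (is_series_Im _ _ (Hw x Hx)). }
  intros n. apply injective_projections; [exact (Hre n) | exact (Him n)].
Qed.

Lemma cauchy_prod_shift_r (x y y' : nat -> C) n :
  y 0%nat = 0 -> (forall m, y (S m) = y' m) ->
  cauchy_prod x y (S n) = cauchy_prod x y' n.
Proof.
  intros H0 Hy. unfold cauchy_prod. rewrite sum_Sn, Nat.sub_diag, H0, Cmult_0_r.
  etransitivity; [apply Cplus_0_r|]. apply sum_n_ext_loc. intros k Hk.
  replace (S n - k)%nat with (S (n - k)) by lia. rewrite Hy. reflexivity.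
Qed.

Lemma cauchy_prod_shift_l (x x' y : nat -> C) n :
  x 0%nat = 0 -> (forall j, x (S j) = x' j) ->
  cauchy_prod x y (S n) = cauchy_prod x' y n.
Proof.
  intros H0 Hx. unfold cauchy_prod, sum_n.
  rewrite sum_Sn_m, <- sum_n_m_S by lia. rewrite H0, Cmult_0_l.
  etransitivity; [apply Cplus_0_l|]. apply sum_n_m_ext. intros j. rewrite Hx. reflexivity.
Qed.

Lemma cauchy_prod_scal_l (s : C) (x y : nat -> C) n :
  cauchy_prod (fun j => s * x j) y n = s * cauchy_prod x y n.
Proof.
  unfold cauchy_prod. etransitivity; [|exact (sum_n_mult_l s _ n)].
  apply sum_n_ext. intros j. symmetry. apply Cmult_assoc.
Qed.

Lemma cauchy_prod_plus_l (x x' y : nat -> C) n :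
  cauchy_prod (fun j => x j + x' j) y n = cauchy_prod x y n + cauchy_prod x' y n.
Proof.
  unfold cauchy_prod. etransitivity; [|exact (sum_n_plus _ _ n)].
  apply sum_n_ext. intros j. apply Cmult_plus_distr_r.
Qed.

Lemma cauchy_prod_quadratic_weight (alpha beta : C) (x y : nat -> C) N :
  cauchy_prod x (fun m => (alpha + RtoC (INR m)) * (beta + RtoC (INR m)) * y m) N =
  (alpha + RtoC (INR N)) * (beta + RtoC (INR N)) * cauchy_prod x y N
  - (alpha + beta + 2 * RtoC (INR N) - 1) * cauchy_prod (fun j => RtoC (INR j) * x j) y N
  + cauchy_prod (fun j => RtoC (INR j) * (RtoC (INR j) - 1) * x j) y N.
Proof.
  transitivity (cauchy_prod (fun j =>
      (alpha + RtoC (INR N)) * (beta + RtoC (INR N)) * x j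
      + - (alpha + beta + 2 * RtoC (INR N) - 1) * (RtoC (INR j) * x j)
      + RtoC (INR j) * (RtoC (INR j) - 1) * x j) y N).
  - unfold cauchy_prod. apply sum_n_ext_loc. intros j Hj.
    rewrite minus_INR, RtoC_minus by exact Hj. simpl. ring.
  - rewrite !cauchy_prod_plus_l, !cauchy_prod_scal_l. ring.
Qed.

Lemma RtoC_neq_0 (r : R) : r <> 0%R -> RtoC r <> 0.
Proof. intros Hr E. apply Hr, RtoC_inj, E. Qed.

Lemma RtoC_INR_fact_neq_0 n : RtoC (INR (fact n)) <> 0.
Proof. apply RtoC_neq_0, INR_fact_neq_0. Qed.

Lemma RtoC_INR_S_neq_0 n : RtoC (INR n) + 1 <> 0.
Proof. rewrite <- RtoC_plus, <- S_INR. apply RtoC_neq_0, not_0_INR. discriminate. Qed.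

Lemma c_admissible_add_INR_neq_0 c n : c_admissible c -> c + RtoC (INR n) <> 0.
Proof. intros Hc E. apply (Hc n). rewrite <- (Cplus_0_l (- _)), <- E. ring. Qed.

Lemma poch_neq_0 c n : c_admissible c -> poch c n <> 0.
Proof.
  intros Hc. induction n as [|n IH]; simpl.
  - apply C1_nz.
  - apply Cmult_neq_0; [exact IH | apply c_admissible_add_INR_neq_0, Hc].
Qed.

Definition exp_coef (p : C) (n : nat) : C := p ^ n / RtoC (INR (fact n)).

Definition hyp_coef (a b c : C) (n : nat) : C :=
  poch a n * poch b n / (poch c n * RtoC (INR (fact n))).

Definition exp_hyp_coef (a b c p : C) : nat -> C :=
  cauchy_prod (exp_coef p) (hyp_coef a b c).

Lemma exp_coef_succ p j : RtoC (INR (S j)) * exp_coef p (S j) = p * exp_coef p j.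
Proof.
  unfold exp_coef. rewrite fact_simpl, mult_INR, RtoC_mult.
  pose proof (RtoC_INR_fact_neq_0 j).
  assert (RtoC (INR (S j)) <> 0) by (rewrite S_INR, RtoC_plus; apply RtoC_INR_S_neq_0).
  simpl Cpow. field. split; assumption.
Qed.

Lemma hyp_coef_succ a b c m : c_admissible c ->
  (RtoC (INR m) + 1) * (c + RtoC (INR m)) * hyp_coef a b c (S m)
  = (a + RtoC (INR m)) * (b + RtoC (INR m)) * hyp_coef a b c m.
Proof.
  intros Hc. unfold hyp_coef. simpl poch.
  rewrite fact_simpl, mult_INR, S_INR, RtoC_mult, RtoC_plus.
  pose proof (poch_neq_0 c m Hc). pose proof (c_admissible_add_INR_neq_0 c m Hc).
  pose proof (RtoC_INR_fact_neq_0 m). pose proof (RtoC_INR_S_neq_0 m).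
  field. repeat split; assumption.
Qed.

Lemma cauchy_prod_exp_moment1 p y n :
  cauchy_prod (fun j => RtoC (INR j) * exp_coef p j) y (S n)
  = p * cauchy_prod (exp_coef p) y n.
Proof.
  rewrite (cauchy_prod_shift_l _ (fun j => p * exp_coef p j)).
  - apply cauchy_prod_scal_l.
  - simpl. ring.
  - intros j. apply exp_coef_succ.
Qed.

Lemma cauchy_prod_exp_moment2 p y n :
  cauchy_prod (fun j => RtoC (INR j) * (RtoC (INR j) - 1) * exp_coef p j) y (S (S n))
  = p ^ 2 * cauchy_prod (exp_coef p) y n.
Proof.
  rewrite (cauchy_prod_shift_l _ (fun j => p * (RtoC (INR j) * exp_coef p j))).
  - rewrite cauchy_prod_scal_l, cauchy_prod_exp_moment1. ring.
  - simpl. ring.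
  - intros j. transitivity (RtoC (INR j) * (p * exp_coef p j)); [|ring].
    rewrite <- exp_coef_succ, S_INR, RtoC_plus. ring.
Qed.

Lemma exp_hyp_coef_rec a b c p n : c_admissible c -> (2 <= n)%nat ->
  let N := RtoC (INR n) in
  (N + 1) * (c + N) * exp_hyp_coef a b c p (S n) =
  ((a + N) * (b + N) + p * (c + 2 * N)) * exp_hyp_coef a b c p n
  - p * (a + b + 2 * N + p - 1) * exp_hyp_coef a b c p (n - 1)
  + p ^ 2 * exp_hyp_coef a b c p (n - 2).
Proof.
  intros Hc Hn N. destruct n as [|[|k]]; try lia.
  replace (S (S k) - 1)%nat with (S k) by lia.
  replace (S (S k) - 2)%nat with k by lia.
  unfold exp_hyp_coef.
  (* m (c + m - 1) h_m vanishes at m = 0 and its shift is (a + m) (b + m) h_m,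
     so both sides are quadratic weights of h. *)
  assert (Hshift :
    cauchy_prod (exp_coef p)
      (fun m => (0 + RtoC (INR m)) * (c - 1 + RtoC (INR m)) * hyp_coef a b c m) (S (S (S k)))
    = cauchy_prod (exp_coef p)
        (fun m => (a + RtoC (INR m)) * (b + RtoC (INR m)) * hyp_coef a b c m) (S (S k))).
  { apply cauchy_prod_shift_r.
    - simpl. ring.
    - intros m. rewrite <- hyp_coef_succ by exact Hc. rewrite S_INR, RtoC_plus. ring. }
  rewrite !cauchy_prod_quadratic_weight, !cauchy_prod_exp_moment1,
    !cauchy_prod_exp_moment2 in Hshift.
  rewrite S_INR, RtoC_plus in Hshift. fold N in Hshift.
  apply Ceq_minus. etransitivity; [|exact (proj1 (Ceq_minus _ _) Hshift)]. ring.
Qed.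

Lemma exp_hyp_coef_0 a b c p : exp_hyp_coef a b c p 0 = 1.
Proof. unfold exp_hyp_coef, cauchy_prod, exp_coef, hyp_coef. rewrite sum_O. simpl. field. Qed.

Lemma exp_hyp_coef_1 a b c p : c_admissible c ->
  exp_hyp_coef a b c p 1 = a * b / c + p.
Proof.
  intros Hc. pose proof (c_admissible_add_INR_neq_0 c 0 Hc) as H0.
  simpl INR in H0. rewrite Cplus_0_r in H0.
  unfold exp_hyp_coef, cauchy_prod, exp_coef, hyp_coef.
  rewrite sum_Sn, sum_O. unfold plus. simpl.
  field. exact H0.
Qed.

Lemma exp_hyp_coef_2 a b c p : c_admissible c ->
  exp_hyp_coef a b c p 2
  = a * (1 + a) * b * (1 + b) / (2 * c * (1 + c)) + a * b * p / c + p ^ 2 / 2.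
Proof.
  intros Hc. pose proof (c_admissible_add_INR_neq_0 c 0 Hc) as H0.
  pose proof (c_admissible_add_INR_neq_0 c 1 Hc) as H1.
  simpl INR in H0, H1. rewrite Cplus_0_r in H0. rewrite Cplus_comm in H1.
  assert (H2 : RtoC 2 <> 0) by (apply RtoC_neq_0; lra).
  unfold exp_hyp_coef, cauchy_prod, exp_coef, hyp_coef.
  rewrite !sum_Sn, sum_O. unfold plus. simpl.
  replace (RtoC (1 + 1)) with (RtoC 2) by (f_equal; ring).
  field. repeat split; assumption.
Qed.

Lemma cexp_term_mul p z n : cexp_term (p * z) n = exp_coef p n * z ^ n.
Proof.
  unfold cexp_term, exp_coef. rewrite Cpow_mult_l.
  pose proof (RtoC_INR_fact_neq_0 n). field. assumption.
Qed.

Lemma is_series_exp_hyp_coef a b c p :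
  (forall z, Cmod z < 1 ->
     exists E F, is_series (cexp_term (p * z)) E /\ is_series (hyp_term a b c z) F) ->
  forall z E F, Cmod z < 1 ->
  is_series (cexp_term (p * z)) E -> is_series (hyp_term a b c z) F ->
  is_series (fun n => exp_hyp_coef a b c p n * z ^ n) (E * F).
Proof.
  intros Hser z E F Hz HE HF.
  assert (Hexp : forall w, Cmod w < 1 ->
            exists E', is_series (fun n => exp_coef p n * w ^ n) E').
  { intros w Hw. destruct (Hser w Hw) as (E' & _ & HE' & _). exists E'.
    exact (is_series_ext _ _ _ (cexp_term_mul p w) HE'). }
  assert (Hhyp : forall w, Cmod w < 1 ->
            exists F', is_series (fun n => hyp_coef a b c n * w ^ n) F').
  { intros w Hw. destruct (Hser w Hw) as (_ & F' & _ & HF'). exists F'. exact HF'. }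
  apply is_series_cauchy_prod_pow.
  - exact (is_series_ext _ _ _ (cexp_term_mul p z) HE).
  - exact HF.
  - exact (ex_series_Cmod_unit_disk _ Hexp z Hz).
  - exact (ex_series_Cmod_unit_disk _ Hhyp z Hz).
Qed.

Theorem theorem3p1 (a b c p : C) (u : nat -> C) :
  c_admissible c ->
  (forall z : C, (Cmod z < 1)%R ->
     exists E Fz : C,
       is_series (cexp_term (p * z)) E /\
       is_series (hyp_term a b c z) Fz /\
       is_series (fun n => u n * z ^ n) (E * Fz)) ->
  u 0%nat = 1 /\
  u 1%nat = a * b / c + p /\
  u 2%nat = a * (1 + a) * b * (1 + b) / (2 * c * (1 + c)) + a * b * p / c + p ^ 2 / 2 /\
  (forall n : nat, (2 <= n)%nat ->
     let N := RtoC (INR n) in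
     u (S n) =
       ((a + N) * (b + N) + p * (c + 2 * N)) / ((N + 1) * (c + N)) * u n
       - p * (a + b + 2 * N + p - 1) / ((N + 1) * (c + N)) * u (n - 1)%nat
       + p ^ 2 / ((N + 1) * (c + N)) * u (n - 2)%nat).
Proof.
  intros Hc Hser.
  assert (Huv : forall n, u n = exp_hyp_coef a b c p n).
  { apply pseries_coef_unique. intros z Hz.
    destruct (Hser z Hz) as (E & F & HE & HF & Hu).
    exists (E * F). split; [exact Hu|].
    apply is_series_exp_hyp_coef; [|exact Hz | exact HE | exact HF].
    intros w Hw. destruct (Hser w Hw) as (E' & F' & HE' & HF' & _). eauto. }
  rewrite !Huv. split; [apply exp_hyp_coef_0|].
  split; [apply exp_hyp_coef_1, Hc|]. split; [apply exp_hyp_coef_2, Hc|].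
  intros n Hn N. rewrite !Huv.
  pose proof (exp_hyp_coef_rec a b c p n Hc Hn) as Hrec. cbv zeta in Hrec. fold N in Hrec.
  pose proof (RtoC_INR_S_neq_0 n) as HN. pose proof (c_admissible_add_INR_neq_0 c n Hc) as HcN.
  fold N in HN, HcN.
  transitivity ((N + 1) * (c + N) * exp_hyp_coef a b c p (S n) / ((N + 1) * (c + N))).
  - field. split; assumption.
  - rewrite Hrec. field. split; assumption.
Qed.
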